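(* Let $J$ be a finite nonempty index set, $\alpha\in(0,1/4]$, $D\ge0$, and let $T$ be a positive integer with $\alpha^2T\ge\ln(|J|+2.5\,T D|J|)$. Let $w^1\in\mathbb R^J$ have $w^1_j=1$ for all $j$. Suppose that for $i=1,\dots,T$ we are given (possibly depending on everything before) vectors $g^i,\tilde w^i\in\mathbb R^J$ satisfying $\|g^i\|_\infty\le2$, $\|w^i-\tilde w^i\|_\infty\le D$, and $\langle g^i,\tilde w^i\rangle\le0$, and we set $w^{i+1}_j=w^i_j(1+\alpha g^i_j)$ for all $j\in J$. Then $\frac1T\sum_{i=1}^T g^i_j\le5\alpha$ for every $j\in J$. *)

From mathcomp Require Import all_boot all_order all_algebra.
From mathcomp Require Import all_classical all_reals exp.
Set Implicit Arguments. Unset Strict Implicit. Unset Printing Implicit Defensive.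

(** The weights [w^i_j] track the exponentiated cumulative gains of the
    coordinates.  Since [|alpha g| <= 1/2], each step multiplies [w_j] by
    [1 + alpha g_j >= exp (alpha g_j - 4 alpha^2)], so [w^{T+1}_j] is at least
    [exp (alpha S_j - 4 alpha^2 T)] with [S_j = sum_i g^i_j].  On the other
    hand [<g^i, w^i>] exceeds [<g^i, wt^i> <= 0] by at most [2 D |J|], so the
    total weight grows by at most [2 alpha D |J|] per step and stays below
    [|J| + 5/2 T D |J| <= exp (alpha^2 T)].  Comparing the two bounds gives
    [alpha S_j <= 5 alpha^2 T]. *)

From mathcomp Require Import all_boot all_order all_algebra.
From mathcomp Require Import all_classical all_reals exp.
From mathcomp Require Import sequences.
From mathcomp Require Import ring lra.
Import Order.TTheory GRing.Theory Num.Theory.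
Set Implicit Arguments. Unset Strict Implicit. Unset Printing Implicit Defensive.
Local Open Scope ring_scope.

Lemma expR_ge_sum_exp_coeff (R : realType) (x : R) (n : nat) : 0 <= x ->
  \sum_(0 <= k < n) x ^+ k / k`!%:R <= expR x.
Proof.
move=> x_ge0; apply: (nondecreasing_cvgn_le _ (is_cvg_series_exp_coeff x)).
by apply: nondecreasing_series => k _ _; rewrite divr_ge0 ?exprn_ge0.
Qed.

Lemma expR_ge_quadratic (R : realType) (x : R) : 0 <= x ->
  1 + x + x ^+ 2 / 2 <= expR x.
Proof.
move=> x_ge0; apply: le_trans (expR_ge_sum_exp_coeff 3 x_ge0).
by rewrite !big_nat_recr //= big_nil add0r expr0 expr1 !divr1.
Qed.

Lemma expR_subr_sqr_le1D (R : realType) (x : R) : `|x| <= 1 / 2 ->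
  expR (x - x ^+ 2) <= 1 + x.
Proof.
move=> x_small; have E_gt0 := expR_gt0 (x ^+ 2 - x).
suff one_le : 1 <= (1 + x) * expR (x ^+ 2 - x).
  by rewrite -opprB expRN -div1r ler_pdivrMr.
have [x_ge0|x_lt0] := leP 0 x.
- have := expR_ge1Dx (x ^+ 2 - x).
  have : x <= 1 / 2 by rewrite -(ger0_norm x_ge0).
  nra.
- pose y := - x; have y_ge0 : 0 <= y by rewrite oppr_ge0 ltW.
  have y_le : y <= 1 / 2 by rewrite /y -(ltr0_norm x_lt0).
  have -> : x ^+ 2 - x = y + y ^+ 2 by rewrite /y sqrrN addrC.
  have -> : 1 + x = 1 - y by rewrite /y opprK.
  have taylor2_bound : 1 <= (1 - y) * (1 + (y + y ^+ 2) + (y + y ^+ 2) ^+ 2 / 2).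
    (* The difference of the two sides is [y^2 (1 - y - y^2 - y^3) / 2]. *)
    have cubic_ge0 : 0 <= 1 - y - y ^+ 2 - y ^+ 3 by nra.
    have : 0 <= y ^+ 2 * (1 - y - y ^+ 2 - y ^+ 3) by rewrite mulr_ge0 ?sqr_ge0.
    nra.
  apply: le_trans taylor2_bound _; apply: ler_wpM2l; first lra.
  by rewrite expR_ge_quadratic // addr_ge0 ?sqr_ge0.
Qed.

Section MultiplicativeWeights.
Variables (R : realType) (J : finType) (alpha D : R) (T : nat).
Variables (g wt w : nat -> J -> R).
Hypothesis alpha_gt0 : 0 < alpha.
Hypothesis alpha_le : alpha <= 1 / 4.
Hypothesis w1 : forall j, w 1%N j = 1.
Hypothesis g_bounded : forall i, (1 <= i <= T)%N -> forall j, `|g i j| <= 2.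
Hypothesis wt_close :
  forall i, (1 <= i <= T)%N -> forall j, `|w i j - wt i j| <= D.
Hypothesis gain_nonpos :
  forall i, (1 <= i <= T)%N -> \sum_(j : J) g i j * wt i j <= 0.
Hypothesis w_update : forall i, (1 <= i <= T)%N ->
  forall j, w i.+1 j = w i j * (1 + alpha * g i j).

Let N : R := #|J|%:R.

Lemma step_small i j : (1 <= i <= T)%N -> `|alpha * g i j| <= 1 / 2.
Proof.
move=> iT; rewrite normrM (gtr0_norm alpha_gt0).
apply: le_trans (ler_pM (ltW alpha_gt0) (normr_ge0 _) alpha_le (g_bounded iT j)) _.
lra.
Qed.

Lemma weight_gt0 k j : (k <= T)%N -> 0 < w k.+1 j.
Proof.
elim: k => [|k IH] kT; first by rewrite w1.
have kT' : (1 <= k.+1 <= T)%N by rewrite kT.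
rewrite w_update // mulr_gt0 ?IH ?(ltnW kT) //.
have := step_small j kT'; rewrite ler_norml; lra.
Qed.

Lemma weighted_gain_le i : (1 <= i <= T)%N ->
  \sum_(j : J) w i j * g i j <= 2 * D * N.
Proof.
move=> iT; have split_gain j :
    w i j * g i j = g i j * wt i j + g i j * (w i j - wt i j) by ring.
under eq_bigr do rewrite split_gain.
rewrite big_split /= -[2 * D * N]add0r lerD ?gain_nonpos //.
rewrite /N mulr_natr -sumr_const ler_sum // => j _.
rewrite (le_trans (ler_norm _)) // normrM.
by rewrite ler_pM ?g_bounded ?wt_close.
Qed.

Lemma total_weight_le k : (k <= T)%N ->
  \sum_(j : J) w k.+1 j <= N + k%:R * (2 * alpha * D * N).
Proof.
elim: k => [|k IH] kT.
  by rewrite mul0r addr0 (eq_bigr (fun=> 1)) ?sumr_const.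
have kT' : (1 <= k.+1 <= T)%N by rewrite kT.
have grow j : w k.+2 j = w k.+1 j + alpha * (w k.+1 j * g k.+1 j).
  by rewrite w_update //; ring.
under eq_bigr do rewrite grow.
rewrite big_split /= -mulr_sumr -natr1.
have := IH (ltnW kT).
have : alpha * \sum_j w k.+1 j * g k.+1 j <= alpha * (2 * D * N).
  by rewrite ler_wpM2l ?weighted_gain_le ?ltW.
lra.
Qed.

Lemma weight_ge_expR k j : (k <= T)%N ->
  expR (alpha * \sum_(1 <= i < k.+1) g i j - 4 * alpha ^+ 2 * k%:R)
    <= w k.+1 j.
Proof.
elim: k => [|k IH] kT; first by rewrite big_geq // !mulr0 subr0 expR0 w1.
have kT' : (1 <= k.+1 <= T)%N by rewrite kT.
have split_exponent :
    alpha * \sum_(1 <= i < k.+2) g i j - 4 * alpha ^+ 2 * k.+1%:R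
  = (alpha * \sum_(1 <= i < k.+1) g i j - 4 * alpha ^+ 2 * k%:R)
    + (alpha * g k.+1 j - 4 * alpha ^+ 2).
  by rewrite big_nat_recr //= -natr1; ring.
rewrite split_exponent expRD w_update //.
rewrite ler_pM ?expR_ge0 ?IH ?(ltnW kT) //.
apply: le_trans (expR_subr_sqr_le1D (step_small j kT')).
rewrite ler_expR lerD2l lerN2 exprMn [4 * _]mulrC ler_pM2l ?exprn_gt0 //.
have := g_bounded kT' j; rewrite ler_norml; nra.
Qed.

Lemma weight_le_total_weight k j : (k <= T)%N ->
  w k.+1 j <= \sum_(j' : J) w k.+1 j'.
Proof.
move=> kT; rewrite (bigD1 j) //= lerDl sumr_ge0 // => j' _.
exact/ltW/weight_gt0.
Qed.

End MultiplicativeWeights.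

Theorem theorem2p3 (R : realType) (J : finType) (alpha D : R) (T : nat)
  (g wt w : nat -> J -> R) :
  (0 < #|J|)%N ->
  0 < alpha -> alpha <= 1 / 4 ->
  0 <= D ->
  (0 < T)%N ->
  ln (#|J|%:R + 5 / 2 * T%:R * D * #|J|%:R) <= alpha ^+ 2 * T%:R ->
  (forall j, w 1%N j = 1) ->
  (forall i, (1 <= i <= T)%N -> forall j, `|g i j| <= 2) ->
  (forall i, (1 <= i <= T)%N -> forall j, `|w i j - wt i j| <= D) ->
  (forall i, (1 <= i <= T)%N -> \sum_(j : J) g i j * wt i j <= 0) ->
  (forall i, (1 <= i <= T)%N -> forall j, w i.+1 j = w i j * (1 + alpha * g i j)) ->
  forall j : J, T%:R^-1 * \sum_(1 <= i < T.+1) g i j <= 5 * alpha.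
Proof.
move=> J_gt0 a_gt0 a_le D_ge0 T_gt0 ln_le w1 g_bd wt_cl gain w_upd j.
set N : R := #|J|%:R.
rewrite (_ : 5 / 2 * _ * D * N = 5 / 2 * (T%:R * D * N)) in ln_le; last by ring.
set M := N + _ in ln_le.
have N_ge1 : 1 <= N by rewrite ler1n.
have TDN_ge0 : 0 <= T%:R * D * N by rewrite !mulr_ge0.
have total_le_M : N + T%:R * (2 * alpha * D * N) <= M.
  rewrite /M (_ : T%:R * _ = 2 * alpha * (T%:R * D * N)); last by ring.
  nra.
have M_le : M <= expR (alpha ^+ 2 * T%:R).
  by rewrite -[leLHS](@lnK R M) ?ler_expR // posrE /M; lra.
have lower := weight_ge_expR a_gt0 a_le w1 g_bd w_upd j (leqnn T).
have upper : w T.+1 j <= expR (alpha ^+ 2 * T%:R).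
  apply: le_trans (weight_le_total_weight a_gt0 a_le w1 g_bd w_upd j (leqnn T)) _.
  apply: le_trans (total_weight_le a_gt0 w1 g_bd wt_cl gain w_upd (leqnn T)) _.
  exact: le_trans total_le_M M_le.
have := le_trans lower upper; rewrite ler_expR => gain_le.
rewrite ler_pdivrMl ?ltr0n // -(ler_pM2l a_gt0); nra.
Qed.
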